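(* Let $\mathcal{X}=\langle P,K,V\rangle$ be a polyhedral model. The logical equivalence relation $\equiv$ on $P$ has only finitely many equivalence classes, and for each equivalence class $C$ there is an SLCS formula $\phi^C$ such that for all $x\in P$: $\mathcal{X},x\models\phi^C\iff x\in C$.
   Context: A $d$-simplex $\sigma\subseteq\mathbb{R}^m$ is the convex hull of $d+1$ affinely independent points $v_0,\dots,v_d$ (its vertices); the simplexes spanned by subsets of the vertices (including the empty simplex) are its faces, and $\tau\preceq\sigma$ means $\tau$ is a face of $\sigma$. The relative interior of $\sigma$ is $\tilde\sigma=\{\sum_i\lambda_iv_i:\lambda_i\in(0,1],\sum_i\lambda_i=1\}$. A simplicial complex $K$ is a finite set of simplexes of $\mathbb{R}^m$ closed under taking faces and such that the intersection of any two of its simplexes is a face of both. Its polyhedron is $|K|=\bigcup K$, with the subspace topology of $\mathbb{R}^m$; $\mathcal{C}$ and $\mathcal{I}$ denote closure and interior in this space. The cells of $K$ are the sets $\tilde\sigma$ for nonempty $\sigma\in K$; they form a partition $\tilde K$ of $|K|$. A path in a space $P$ is a continuous $\pi:[0,1]\to P$; $\pi(S)=\{\pi(s):s\in S\}$. Fix a finite set $AP$ of atomic propositions. A polyhedral model is $\mathcal{X}=\langle P,K,V\rangle$ with $K$ a simplicial complex, $P=|K|$, and $V:AP\to\mathcal{P}(P)$ such that each $V(p)$ is a union of cells of $K$ ($K$ is then called coherent with the model). SLCS formulas: $\phi::=\top\mid p\mid\neg\phi\mid\phi\wedge\phi\mid\Box\phi\mid\gamma(\phi,\phi)$, $p\in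 AP$. Semantics at $x\in P$, with $[\![\phi]\!]=\{x\in P:\mathcal{X},x\models\phi\}$: $\top$ always holds; $x\models p$ iff $x\in V(p)$; Boolean connectives as usual; $x\models\Box\phi$ iff $x\in\mathcal{I}([\![\phi]\!])$; $x\models\gamma(\phi,\psi)$ iff there is a path $\pi$ in $P$ with $\pi(0)=x$, $\pi((0,1))\subseteq[\![\phi]\!]$ and $\pi(1)\in[\![\psi]\!]$. Logical equivalence $\equiv$ on $P$: $x\equiv y$ iff $x$ and $y$ satisfy exactly the same SLCS formulas. *)

From HB Require Import structures.
From mathcomp Require Import all_boot all_order all_algebra.
From mathcomp Require Import all_classical all_reals.
From mathcomp Require Import all_analysis.
Import numFieldNormedType.Exports.
Set Implicit Arguments.
Unset Strict Implicit.
Unset Printing Implicit Defensive.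
Import Order.TTheory GRing.Theory Num.Theory.
Local Open Scope ring_scope.
Local Open Scope classical_set_scope.

(* A simplex is given by its (duplicate-free) list of vertices. *)

Definition conv (R : realType) (m : nat) (s : seq 'rV[R]_m) : set 'rV[R]_m :=
  [set x | exists lam : 'rV[R]_m -> R,
     (forall v, v \in s -> 0 <= lam v) /\
     \sum_(v <- s) lam v = 1 /\ x = \sum_(v <- s) lam v *: v].

Definition relint (R : realType) (m : nat) (s : seq 'rV[R]_m) : set 'rV[R]_m :=
  [set x | exists lam : 'rV[R]_m -> R,
     (forall v, v \in s -> 0 < lam v /\ lam v <= 1) /\
     \sum_(v <- s) lam v = 1 /\ x = \sum_(v <- s) lam v *: v].

Definition affine_indep (R : realType) (m : nat) (s : seq 'rV[R]_m) : Prop :=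
  uniq s /\
  forall lam : 'rV[R]_m -> R,
    \sum_(v <- s) lam v *: v = 0 -> \sum_(v <- s) lam v = 0 ->
    forall v, v \in s -> lam v = 0.

Definition is_complex (R : realType) (m : nat) (K : seq (seq 'rV[R]_m)) : Prop :=
  (forall s, s \in K -> affine_indep s) /\
  (forall s t, s \in K -> uniq t -> {subset t <= s} ->
     exists2 t', t' \in K & perm_eq t t') /\
  (forall s t, s \in K -> t \in K ->
     exists u : seq 'rV[R]_m, {subset u <= s} /\ {subset u <= t} /\
       conv s `&` conv t = conv u).

Definition polyhedron (R : realType) (m : nat) (K : seq (seq 'rV[R]_m))
  : set 'rV[R]_m := [set x | exists2 s, s \in K & conv s x].

Definition is_polyhedral_model (R : realType) (m : nat) (AP : Type)
  (K : seq (seq 'rV[R]_m)) (V : AP -> set 'rV[R]_m) : Prop :=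
  is_complex K /\
  forall p, exists S : seq (seq 'rV[R]_m),
    {subset S <= K} /\ (forall s, s \in S -> s != [::]) /\
    V p = [set x | exists2 s, s \in S & relint s x].

Definition sinterior (R : realType) (m : nat) (P S : set 'rV[R]_m)
  : set 'rV[R]_m :=
  [set x | P x /\ exists U : set 'rV[R]_m, open U /\ U x /\ U `&` P `<=` S].

Definition is_path (R : realType) (m : nat) (P : set 'rV[R]_m)
  (pi : R -> 'rV[R]_m) : Prop :=
  {within `[(0:R), 1], continuous pi} /\
  (forall s : R, 0 <= s <= 1 -> P (pi s)).

Inductive slcs (AP : Type) : Type :=
  | FTop
  | FAtom of AP
  | FNeg of slcs AP
  | FAnd of slcs AP & slcs AP
  | FBox of slcs AP
  | FGamma of slcs AP & slcs AP.
Arguments FTop {AP}.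

Fixpoint sem (R : realType) (m : nat) (AP : Type)
  (K : seq (seq 'rV[R]_m)) (V : AP -> set 'rV[R]_m) (phi : slcs AP)
  : set 'rV[R]_m :=
  match phi with
  | FTop => polyhedron K
  | FAtom p => V p
  | FNeg f => polyhedron K `\` sem K V f
  | FAnd f g => sem K V f `&` sem K V g
  | FBox f => sinterior (polyhedron K) (sem K V f)
  | FGamma f g =>
      [set x | exists pi : R -> 'rV[R]_m,
         is_path (polyhedron K) pi /\ pi 0 = x /\
         (forall s : R, 0 < s < 1 -> sem K V f (pi s)) /\ sem K V g (pi 1)]
  end.

Definition lequiv (R : realType) (m : nat) (AP : Type)
  (K : seq (seq 'rV[R]_m)) (V : AP -> set 'rV[R]_m) (x y : 'rV[R]_m) : Prop :=
  forall phi : slcs AP, sem K V phi x <-> sem K V phi y.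

Definition eq_classes (R : realType) (m : nat) (AP : Type)
  (K : seq (seq 'rV[R]_m)) (V : AP -> set 'rV[R]_m) : set (set 'rV[R]_m) :=
  [set C | exists2 x, polyhedron K x &
     C = [set y | polyhedron K y /\ lequiv K V x y]].

(* The key fact is CELL INVARIANCE (sem_cell_invariant): two points in the
   relative interior of the same simplex of K satisfy the same SLCS formulas.
   It is proved by induction on the formula; atoms are unions of cells by
   definition, and the Box and gamma cases rest on the OPEN STAR of a cell:
   a point y in the cell of s has an open neighbourhood U such that every point
   of |K| in U lies in the cell of a simplex r having s as a face (star_nbhs),
   and the segment from a point of the cell of s to a point of the cell of r
   enters the cell of r immediately (relint_segment).  For gamma, a witness
   path from x is rerouted into one from y by prepending a straight segment.

   Hence every equivalence class is a union of cells.  As every point lies in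
   some cell and K is finite, there are finitely many classes; a formula
   characterising the class of x0 is the conjunction, over the simplexes s of
   K, of a formula true at x0 and false on the cell of s whenever that cell is
   not equivalent to x0 (separating_formula). *)
From Pilot Require Import Defs.
From HB Require Import structures.
From mathcomp Require Import all_boot all_order all_algebra.
From mathcomp Require Import all_classical all_reals.
From mathcomp Require Import all_analysis.
From mathcomp Require Import lra.
Import numFieldNormedType.Exports.
Set Implicit Arguments.
Unset Strict Implicit.
Unset Printing Implicit Defensive.
Import Order.TTheory GRing.Theory Num.Theory.
Local Open Scope classical_set_scope.
Local Open Scope ring_scope.

(* MathComp-Analysis also defines a [conv] (convex combination); we mean the
   convex hull of Defs. *)
Local Notation conv := Defs.conv.

Lemma ler_term_sum (R : numDomainType) (T : eqType) (s : seq T) (f : T -> R) v0 :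
  (forall v, v \in s -> 0 <= f v) -> v0 \in s -> f v0 <= \sum_(v <- s) f v.
Proof.
elim: s => [//|a s IH] f_ge0; rewrite in_cons big_cons => /orP [/eqP ->|v0s].
  by rewrite lerDl big_seq sumr_ge0 // => i iS; apply: f_ge0; rewrite in_cons iS orbT.
apply: le_trans (IH _ v0s) _ => [v vs|]; first by apply: f_ge0; rewrite in_cons vs orbT.
by rewrite lerDr f_ge0 // in_cons eqxx.
Qed.

Lemma sum_regroup (T : eqType) (V : zmodType) (s u : seq T) (F : T -> V) :
  uniq s -> {subset u <= s} ->
  \sum_(w <- u) F w = \sum_(v <- s) \sum_(w <- u | w == v) F w.
Proof.
move=> us sub; rewrite (exchange_big_dep xpredT) //=.
apply: eq_big_seq => w wu; rewrite big_mkcond (bigD1_seq w) ?sub //=.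
by rewrite eqxx big1 ?addr0 // => v vw; rewrite eq_sym (negbTE vw).
Qed.

Lemma sum_filter_vanishing (T : eqType) (V : zmodType) (t : seq T) (P : pred T)
  (G : T -> V) :
  (forall v, v \in t -> ~~ P v -> G v = 0) ->
  \sum_(v <- seq.filter P t) G v = \sum_(v <- t) G v.
Proof.
move=> G0; rewrite big_filter big_mkcond; apply: eq_big_seq => v vt.
by case: ifP => // /negbT /(G0 v vt) ->.
Qed.

Lemma sum_extend_by_zero (T : eqType) (V : zmodType) (s tau : seq T) (G : T -> V) :
  uniq s -> uniq tau -> {subset s <= tau} ->
  \sum_(v <- tau) (if v \in s then G v else 0) = \sum_(v <- s) G v.
Proof.
move=> us ut sub; rewrite -big_mkcond -big_filter; apply: perm_big.
apply: uniq_perm; [exact: filter_uniq | exact: us |] => v.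
by rewrite mem_filter; apply/andP/idP => [[]//|vs]; split=> //; exact: sub.
Qed.

Section Barycentric.
Variables (R : realType) (m : nat).
Implicit Types (s t u : seq 'rV[R]_m) (x y z : 'rV[R]_m).

Lemma conv_perm s t : perm_eq s t -> conv s = conv t.
Proof.
move=> pst; apply/seteqP; split=> x [lam [h0 [h1 hx]]]; exists lam.
- by rewrite -!(perm_big _ pst); split=> // v; rewrite -(perm_mem pst); apply: h0.
- by rewrite !(perm_big _ pst); split=> // v; rewrite (perm_mem pst); apply: h0.
Qed.

Lemma relint_perm s t : perm_eq s t -> relint s = relint t.
Proof.
move=> pst; apply/seteqP; split=> x [lam [h0 [h1 hx]]]; exists lam.
- by rewrite -!(perm_big _ pst); split=> // v; rewrite -(perm_mem pst); apply: h0.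
- by rewrite !(perm_big _ pst); split=> // v; rewrite (perm_mem pst); apply: h0.
Qed.

Lemma relint_conv s : relint s `<=` conv s.
Proof. by move=> x [lam [h0 h1]]; exists lam; split=> // v /h0 [/ltW]. Qed.

Lemma barycentric_support s u (lam mu : 'rV[R]_m -> R) :
  affine_indep s -> {subset u <= s} ->
  \sum_(v <- s) lam v = 1 -> \sum_(w <- u) mu w = 1 ->
  \sum_(v <- s) lam v *: v = \sum_(w <- u) mu w *: w ->
  forall v, v \in s -> v \notin u -> lam v = 0.
Proof.
move=> [us indep] sub lam1 mu1 lam_mu.
pose mu' v := \sum_(w <- u | w == v) mu w.
have comb0 : \sum_(v <- s) (lam v - mu' v) *: v = 0.
  under eq_bigr do rewrite scalerBl.
  rewrite sumrB lam_mu (sum_regroup (fun w => mu w *: w) us sub).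
  apply/eqP; rewrite subr_eq0; apply/eqP; apply: eq_bigr => v _.
  by rewrite /mu' scaler_suml; apply: eq_bigr => w /eqP ->.
have sum0 : \sum_(v <- s) (lam v - mu' v) = 0.
  by rewrite sumrB lam1 -(sum_regroup mu us sub) mu1 subrr.
move=> v vs vu; have := indep _ comb0 sum0 v vs.
rewrite /mu' big_seq_cond big1 ?subr0 // => w /andP [wu /eqP wv].
by move: vu; rewrite -wv wu.
Qed.

Lemma relint_segment s tau y z (t : R) :
  uniq s -> uniq tau -> {subset s <= tau} -> relint s y -> relint tau z ->
  0 < t <= 1 -> relint tau ((1 - t) *: y + t *: z).
Proof.
move=> us ut sub [lam [lam01 [lam1 ->]]] [mu [mu01 [mu1 ->]]] /andP [t0 t1].
pose lam' v := if v \in s then lam v else 0.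
have lam'1 : \sum_(v <- tau) lam' v = 1 by rewrite sum_extend_by_zero.
have lam'y : \sum_(v <- tau) lam' v *: v = \sum_(v <- s) lam v *: v.
  rewrite -(sum_extend_by_zero (fun v => lam v *: v) us ut sub).
  by apply: eq_bigr => v _; rewrite /lam'; case: ifP; rewrite ?scale0r.
have lam'0 v : 0 <= lam' v by rewrite /lam'; case: ifP => [/lam01 [/ltW]|].
pose nu v := (1 - t) * lam' v + t * mu v.
have nu0 v : v \in tau -> 0 < nu v.
  move=> vt; rewrite /nu; apply: ltr_wpDl; first by rewrite mulr_ge0 ?subr_ge0.
  by rewrite mulr_gt0 //; case: (mu01 v vt).
have nu1 : \sum_(v <- tau) nu v = 1.
  by rewrite big_split /= -!mulr_sumr lam'1 mu1 !mulr1 subrK.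
exists nu; split; last split => //.
  move=> v vt; split; first exact: nu0.
  by rewrite -nu1; apply: ler_term_sum => // w wt; apply/ltW/nu0.
rewrite -lam'y !scaler_sumr -big_split /=; apply: eq_bigr => v _.
by rewrite /nu [RHS]scalerDl !scalerA.
Qed.

End Barycentric.

Lemma sum_continuous (T : topologicalType) (R : realType) (V : normedModType R)
  (I : Type) (r : seq I) (G : I -> T -> V) :
  (forall i, continuous (G i)) -> continuous (fun x => \sum_(i <- r) G i x).
Proof. by move=> G_cont; apply: continuous_big => //; exact: add_continuous. Qed.

(* A simplex is closed: it is the continuous image of the compact standard
   simplex {l in [0,1]^n | sum l = 1} under l |-> sum_i l_i f_i. *)
Lemma conv_closed (R : realType) (m : nat) (f : seq 'rV[R]_m) :
  uniq f -> closed (conv f).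
Proof.
move=> uf; set n := size f.
pose F (l : 'rV[R]_n) := \sum_(i < n) l ord0 i *: nth 0 f i.
pose D1 := [set l : 'rV[R]_n | forall i, `[(0:R), 1]%classic (l ord0 i)].
pose D2 := [set l : 'rV[R]_n | \sum_(i < n) l ord0 i = 1].
have F_cont : continuous F.
  apply: sum_continuous => i l.
  apply: (@continuousZ R _ _ (fun x : 'rV[R]_n => x ord0 i) (fun=> nth 0 f i)).
    exact: coord_continuous.
  exact: cst_continuous.
have -> : conv f = F @` (D1 `&` D2).
  apply/seteqP; split => x.
    case=> lam [lam0 [lam1 ->]]; exists (\row_i lam (nth 0 f i)).
      split.
        move=> i; rewrite mxE /= in_itv /= lam0 ?mem_nth //=.
        by rewrite -lam1; apply: ler_term_sum => //; rewrite mem_nth.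
      by rewrite /D2 /= -lam1 (big_nth 0) big_mkord; apply: eq_bigr => i _; rewrite mxE.
    by rewrite /F (big_nth 0) big_mkord; apply: eq_bigr => i _; rewrite mxE.
  case=> l [D1l D2l] <-.
  pose lam v := if insub (index v f) is Some i then l ord0 (i : 'I_n) else 0.
  have lam_nth (i : 'I_n) : lam (nth 0 f i) = l ord0 i.
    by rewrite /lam index_uniq // valK.
  exists lam; split; last split.
  - move=> v vf; rewrite /lam; case: insub => [i|//].
    by have := D1l i; rewrite /= in_itv /= => /andP [].
  - by rewrite (big_nth 0) big_mkord -D2l; apply: eq_bigr => i _; exact: lam_nth.
  - by rewrite /F (big_nth 0) big_mkord; apply: eq_bigr => i _; rewrite lam_nth.
have D1_compact : compact D1 :=
  @rV_compact R n (fun=> `[(0:R), 1]%classic) (fun=> @segment_compact R 0 1).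
have sum_cont : continuous (fun l : 'rV[R]_n => \sum_(i < n) l ord0 i).
  by apply: (@sum_continuous _ R R^o) => i; apply: coord_continuous.
have D2_closed : closed D2 := @preimage_closed _ _ _
  [set x : R | x = 1] (fun l _ => sum_cont l) (@closed_eq R 1).
have img_compact : compact (F @` (D1 `&` D2)).
  exact: continuous_compact (continuous_subspaceT F_cont)
                            (compact_closedI D1_compact D2_closed).
exact: compact_closed (@norm_hausdorff _ _) img_compact.
Qed.

Lemma open_avoiding (T : topologicalType) (I : eqType) (L : seq I)
  (C : I -> set T) :
  (forall i, closed (C i)) -> open [set z | forall i, i \in L -> ~ C i z].
Proof.
move=> C_closed; elim: L => [|a L IH].
  rewrite (_ : [set z | _] = setT); first exact: openT.
  by apply/seteqP; split=> // z _ i; rewrite in_nil.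
rewrite (_ : [set z | _] = ~` C a `&` [set z | forall i, i \in L -> ~ C i z]).
  by apply: openI => //; rewrite openC.
apply/seteqP; split => z /=.
  move=> h; split; first by apply: h; rewrite in_cons eqxx.
  by move=> i iL; apply: h; rewrite in_cons iL orbT.
by case=> Caz h i; rewrite in_cons => /orP [/eqP ->//|]; exact: h.
Qed.

Lemma nbhs0_unit_point (R : realType) (P : set R) :
  nbhs (0:R) P -> exists t, 0 < t < 1 /\ P t.
Proof.
move=> /nbhs_ballP [e /= e0 eP].
pose t := Num.min (e / 2) (2^-1 : R).
have t0 : 0 < t by rewrite lt_min; apply/andP; split; lra.
have t1 : t < 1 by rewrite gt_min; apply/orP; right; lra.
exists t; split; first by rewrite t0 t1.
apply: eP; rewrite /ball /= sub0r normrN gtr0_norm //.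
by rewrite gt_min; apply/orP; left; lra.
Qed.

Lemma segment_continuous (R : realType) (m : nat) (x z : 'rV[R]_m) :
  continuous (fun t : R => (1 - t) *: x + t *: z).
Proof.
move=> t.
apply: (@continuousD R _ _ (fun t : R => (1 - t) *: x) (fun t => t *: z)).
  apply: (@continuousZ R _ _ (fun t : R => 1 - t) (fun=> x));
    last exact: cst_continuous.
  apply: (@continuousB R R^o R (fun=> 1) id); [exact: cst_continuous | exact: cvg_id].
apply: (@continuousZ R _ _ id (fun=> z)); last exact: cst_continuous.
exact: cvg_id.
Qed.

Lemma segment_start (R : realType) (m : nat) (U : set 'rV[R]_m) x z :
  open U -> U x -> exists t, 0 < t < 1 /\ U ((1 - t) *: x + t *: z).
Proof.
move=> oU Ux; apply: nbhs0_unit_point.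
have := @segment_continuous R m x z 0 U; rewrite /= subr0 scale1r scale0r addr0.
by apply; apply: open_nbhs_nbhs.
Qed.

Lemma path_start (R : realType) (m : nat) (P : set 'rV[R]_m) (pi : R -> 'rV[R]_m)
  (U : set 'rV[R]_m) :
  is_path P pi -> open U -> U (pi 0) -> exists s0, 0 < s0 < 1 /\ U (pi s0).
Proof.
move=> [/subspace_continuousP pi_cont _] oU U0.
have unit0 : `[(0:R), 1]%classic 0 by rewrite /= in_itv /= lexx ler01.
have /nbhs0_unit_point [t [/andP [t0 t1] Ut]] :=
  pi_cont 0 unit0 U (open_nbhs_nbhs (conj oU U0)).
by exists t; split; [rewrite t0 t1 | apply: Ut; rewrite /= in_itv /= !ltW].
Qed.

Lemma path_clamp_continuous (R : realType) (m : nat) (pi : R -> 'rV[R]_m) (s0 : R) :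
  {within `[(0:R), 1], continuous pi} -> 0 <= s0 <= 1 ->
  continuous (fun t => pi (Num.min (Num.max t s0) 1)).
Proof.
move=> /subspace_continuousP pi_cont /andP [s00 s01] t N hN.
pose clamp (t : R) := Num.min (Num.max t s0) 1.
have clamp_cont : continuous clamp.
  exact: (min_fun_continuous (max_fun_continuous (fun x => cvg_id)
                                                 (@cst_continuous _ _ s0))
                             (@cst_continuous R R 1)).
have clamp_unit v : `[(0:R), 1]%classic (clamp v).
  by rewrite /= in_itv /= le_min le_max s00 orbT ler01 ge_min lexx orbT.
have near_t : nbhs t (fun v => `[(0:R), 1]%classic (clamp v) -> N (pi (clamp v))).
  exact: clamp_cont t _ (pi_cont _ (clamp_unit t) N hN).
suff clamp_N : nbhs t (fun v => N (pi (clamp v))) by exact: clamp_N.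
by apply: filterS near_t => v; apply.
Qed.

(* Prepending to a path pi the segment from y to pi s0, and then following pi
   from s0 on; see prepend_lo and prepend_hi. *)
Definition prepend (R : realType) (m : nat) (pi : R -> 'rV[R]_m) (y : 'rV[R]_m)
  (s0 : R) : R -> 'rV[R]_m :=
  fun t => pi (Num.min (Num.max t s0) 1) + (1 - Num.min (t / s0) 1) *: (y - pi s0).

Lemma prepend_continuous (R : realType) (m : nat) (pi : R -> 'rV[R]_m) y s0 :
  {within `[(0:R), 1], continuous pi} -> 0 < s0 <= 1 ->
  continuous (prepend pi y s0).
Proof.
move=> pi_cont /andP [s00 s01].
have weight_cont : continuous (fun t : R => 1 - Num.min (t / s0) 1).
  move=> t; apply: (@continuousB R R^o R (fun=> 1) (fun t => Num.min (t / s0) 1)).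
    exact: cst_continuous.
  exact: (min_fun_continuous (@mulrr_continuous R s0^-1) (@cst_continuous R R 1)).
move=> t; apply: (@continuousD R _ _ (fun t => pi (Num.min (Num.max t s0) 1))
                                  (fun t => (1 - Num.min (t / s0) 1) *: (y - pi s0))).
  by apply: path_clamp_continuous => //; rewrite ltW.
apply: (@continuousZ R _ _ _ (fun=> y - pi s0)); first exact: weight_cont.
exact: cvg_cst.
Qed.

Lemma prepend_hi (R : realType) (m : nat) (pi : R -> 'rV[R]_m) y s0 t :
  0 < s0 -> s0 <= t <= 1 -> prepend pi y s0 t = pi t.
Proof.
move=> s00 /andP [s0t t1]; rewrite /prepend (max_idPl s0t) (min_idPl t1).
have -> : Num.min (t / s0) 1 = 1 by apply/min_idPr; rewrite ler_pdivlMr // mul1r.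
by rewrite subrr scale0r addr0.
Qed.

Lemma prepend_lo (R : realType) (m : nat) (pi : R -> 'rV[R]_m) y s0 t :
  0 < s0 <= 1 -> 0 <= t <= s0 ->
  prepend pi y s0 t = (1 - t / s0) *: y + (t / s0) *: pi s0.
Proof.
move=> /andP [s00 s01] /andP [t0 ts0]; rewrite /prepend (max_idPr ts0) (min_idPl s01).
have -> : Num.min (t / s0) 1 = t / s0 by apply/min_idPl; rewrite ler_pdivrMr // mul1r.
by rewrite scalerBr [X in _ - X]scalerBl scale1r opprB addrCA subrKC.
Qed.

Section Complex.
Variables (R : realType) (m : nat) (K : seq (seq 'rV[R]_m)).
Hypothesis complexK : is_complex K.
Implicit Types (s t r : seq 'rV[R]_m) (x y z : 'rV[R]_m).

Lemma simplex_uniq s : s \in K -> uniq s.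
Proof. by case: complexK => /(_ s) ai _ /ai []. Qed.

Lemma relint_polyhedron s x : s \in K -> relint s x -> polyhedron K x.
Proof. by move=> sK sx; exists s => //; apply: relint_conv. Qed.

Lemma relint_face s t x :
  s \in K -> t \in K -> relint s x -> relint t x -> {subset s <= t}.
Proof.
have [ai [_ inter]] := complexK; move=> sK tK sx tx.
have [u [us [ut stu]]] := inter s t sK tK.
have [mu [_ [mu1 mux]]] : conv u x by rewrite -stu; split; apply: relint_conv.
case: sx => lam [lam01 [lam1 lamx]] v vs; have [//|vu] := boolP (v \in u).
  exact: ut.
have := barycentric_support (ai s sK) us lam1 mu1 _ vs vu.
by rewrite -lamx -mux => /(_ erefl) lam0; have [] := lam01 v vs; rewrite lam0 ltxx.
Qed.

Lemma relint_unique s t x :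
  s \in K -> t \in K -> relint s x -> relint t x -> relint s = relint t.
Proof.
move=> sK tK sx tx; apply: relint_perm.
apply: uniq_perm; [exact: simplex_uniq | exact: simplex_uniq |] => v.
by apply/idP/idP; [exact: (relint_face sK tK sx tx) | exact: (relint_face tK sK tx sx)].
Qed.

Lemma relint_support t z : t \in K -> conv t z ->
  exists2 r, r \in K & relint r z /\
    forall v, v \notin r -> conv (seq.filter (predC1 v) t) z.
Proof.
move=> tK [lam [lam0 [lam1 ->]]]; have [_ [faces _]] := complexK.
pose r0 := seq.filter (fun v => 0 < lam v) t.
have r0t : {subset r0 <= t} by move=> v; rewrite mem_filter => /andP [].
have [r rK r0r] := faces t r0 tK (filter_uniq _ (simplex_uniq tK)) r0t.
have lam_zero v : v \in t -> ~~ (0 < lam v) -> lam v = 0.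
  by move=> vt; rewrite -leNgt => lv0; apply/eqP; rewrite eq_le lv0 lam0.
exists r => //; split.
  rewrite -(relint_perm r0r); exists lam; split; last split.
  - move=> v; rewrite mem_filter => /andP [lv vt]; split=> //.
    by rewrite -lam1; apply: ler_term_sum.
  - by rewrite sum_filter_vanishing // => v vt /(lam_zero v vt).
  - by rewrite sum_filter_vanishing // => v vt /(lam_zero v vt) ->; rewrite scale0r.
move=> v; rewrite -(perm_mem r0r) mem_filter => vr.
have lam_v w : w \in t -> ~~ (w != v) -> lam w = 0.
  move=> wt /negPn /eqP wv; apply: lam_zero => //.
  by move: vr; rewrite -wv wt andbT.
exists lam; split; last split.
- by move=> w; rewrite mem_filter => /andP [_ /lam0].
- by rewrite sum_filter_vanishing // => w wt /(lam_v w wt).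
- by rewrite sum_filter_vanishing // => w wt /(lam_v w wt) ->; rewrite scale0r.
Qed.

Lemma polyhedron_cell x : polyhedron K x -> exists2 s, s \in K & relint s x.
Proof. by case=> t tK /(relint_support tK) [r rK [rx _]]; exists r. Qed.

Lemma relint_not_in_facet s t v y :
  s \in K -> t \in K -> relint s y -> v \in s ->
  ~ conv (seq.filter (predC1 v) t) y.
Proof.
move=> sK tK sy vs facet_y; have [ai [faces inter]] := complexK.
set g := seq.filter (predC1 v) t.
have gt : {subset g <= t} by move=> w; rewrite mem_filter => /andP [].
have [g' g'K gg'] := faces t g tK (filter_uniq _ (simplex_uniq tK)) gt.
have [u [us [ug' sg'u]]] := inter s g' sK g'K.
have [mu [_ [mu1 muy]]] : conv u y.
  by rewrite -sg'u; split; [apply: relint_conv | rewrite -(conv_perm gg')].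
case: sy => lam [lam01 [lam1 lamy]].
have vu : v \notin u by apply/negP => /ug'; rewrite -(perm_mem gg') mem_filter /= eqxx.
have := barycentric_support (ai s sK) us lam1 mu1 _ vs vu.
by rewrite -lamy -muy => /(_ erefl) lam0; have [] := lam01 v vs; rewrite lam0 ltxx.
Qed.

(* It is the
   complement of the facets of simplexes of K opposite to vertices of s. *)
Lemma star_nbhs s y : s \in K -> relint s y ->
  exists U : set 'rV[R]_m, open U /\ U y /\ forall z, U z -> polyhedron K z ->
     exists2 r, r \in K & relint r z /\ {subset s <= r}.
Proof.
move=> sK sy.
pose L := [seq (t, v) | t <- K, v <- s].
pose facet (p : seq 'rV[R]_m * 'rV[R]_m) :=
  if uniq p.1 then conv (seq.filter (predC1 p.2) p.1) else set0.
exists [set z | forall p, p \in L -> ~ facet p z]; split; last split.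
- apply: open_avoiding => p; rewrite /facet; case: ifP => up; last exact: closed0.
  by apply: conv_closed; rewrite filter_uniq.
- move=> p /allpairsP [[t v] [tK vs ->]]; rewrite /facet /= simplex_uniq //.
  exact: (relint_not_in_facet sK tK sy vs).
- move=> z Uz [t tK tz]; have [r rK [rz r_facets]] := relint_support tK tz.
  exists r => //; split => // v vs; apply/negPn/negP => vr.
  apply: (Uz (t, v)); first by apply/allpairsP; exists (t, v).
  by rewrite /facet /= simplex_uniq //; exact: r_facets.
Qed.

Definition cell_invariant (S : set 'rV[R]_m) : Prop :=
  forall s, s \in K -> forall x y, relint s x -> relint s y -> S x -> S y.

(* The interior in |K| of a cell invariant set is cell invariant: from an open
   set around x, points of the open star of y are reached by segments from x
   staying in their own cells. *)
Lemma interior_cell_invariant (S : set 'rV[R]_m) :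
  cell_invariant S -> cell_invariant (sinterior (polyhedron K) S).
Proof.
move=> S_inv s sK x y sx sy [_ [U [oU [Ux US]]]].
split; first exact: relint_polyhedron sy.
have [W [oW [Wy starW]]] := star_nbhs sK sy.
exists W; split=> //; split=> // z [Wz Pz].
have [r rK [rz sr]] := starW z Wz Pz.
have [t [/andP [t0 t1] Ut]] := segment_start z oU Ux.
have r_seg : relint r ((1 - t) *: x + t *: z).
  apply: (relint_segment (simplex_uniq sK) (simplex_uniq rK) sr sx rz).
  by rewrite t0 ltW.
apply: (S_inv r rK _ z r_seg rz); apply: US; split=> //.
exact: relint_polyhedron r_seg.
Qed.

(* The set of starting points of paths through S reaching T is cell invariant
   when S is: a path from x enters the open star of the cell of y at some time
   s0, at a point of a cell r having s as a face; prepending the segment from y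
   to that point gives a path from y whose initial part runs in the cell r. *)
Lemma reach_cell_invariant (S T : set 'rV[R]_m) :
  cell_invariant S ->
  cell_invariant [set x | exists pi : R -> 'rV[R]_m,
     is_path (polyhedron K) pi /\ pi 0 = x /\
     (forall t : R, 0 < t < 1 -> S (pi t)) /\ T (pi 1)].
Proof.
move=> S_inv s sK x y sx sy [pi [pi_path [pi0 [piS piT]]]].
have [U [oU [Ux starU]]] := star_nbhs sK sx.
have [s0 [/andP [s00 s01] Us0]] := path_start pi_path oU (eq_ind_r U Ux pi0).
have [r rK [r_s0 sr]] : exists2 r, r \in K & relint r (pi s0) /\ {subset s <= r}.
  by apply: starU => //; apply: pi_path.2; rewrite !ltW.
have s0_unit : 0 < s0 <= 1 by rewrite s00 ltW.
have early (t : R) : 0 < t <= s0 -> relint r (prepend pi y s0 t).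
  move=> /andP [t0 ts0]; rewrite prepend_lo ?(ltW t0) ?ts0 //.
  apply: (relint_segment (simplex_uniq sK) (simplex_uniq rK) sr sy r_s0).
  by rewrite divr_gt0 // ler_pdivrMr // mul1r.
have start : prepend pi y s0 0 = y.
  by rewrite prepend_lo ?lexx ?(ltW s00) // mul0r subr0 scale1r scale0r addr0.
exists (prepend pi y s0); split; last split => //; last split.
- split.
    by apply/continuous_subspaceT/prepend_continuous => //; exact: pi_path.1.
  move=> t /andP [t0 t1]; have [ts0|s0t] := leP t s0.
    have [->|tn0] := eqVneq t 0; first by rewrite start; exact: relint_polyhedron sy.
    by apply: (relint_polyhedron rK); apply: early; rewrite ts0 lt_neqAle eq_sym tn0 t0.
  by rewrite prepend_hi ?t1 ?(ltW s0t) //; apply: pi_path.2; rewrite t1 andbT.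
- move=> t /andP [t0 t1]; have [ts0|s0t] := leP t s0.
    apply: (S_inv r rK (pi s0)) => //; first by apply: early; rewrite t0.
    by apply: piS; rewrite s00.
  by rewrite prepend_hi ?(ltW s0t) ?(ltW t1) //; apply: piS; rewrite t0 t1.
- by rewrite prepend_hi // (ltW s01) lexx.
Qed.

End Complex.

Lemma sem_cell_invariant (R : realType) (m : nat) (AP : Type)
  (K : seq (seq 'rV[R]_m)) (V : AP -> set 'rV[R]_m) (phi : slcs AP) :
  is_polyhedral_model K V -> cell_invariant K (sem K V phi).
Proof.
move=> [complexK atoms_cells].
elim: phi => [|p|f IH|f IHf g IHg|f IH|f IHf g IHg] /=.
- by move=> s sK x y _ sy _; exact: relint_polyhedron sy.
- have [S [SK [_ ->]]] := atoms_cells p.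
  move=> s sK x y sx sy [t tS tx]; exists t => //.
  by rewrite -(relint_unique complexK sK (SK t tS) sx tx).
- move=> s sK x y sx sy [_ nfx]; split; first exact: relint_polyhedron sy.
  by move=> fy; apply: nfx; apply: (IH s sK y x).
- move=> s sK x y sx sy [fx gx].
  by split; [apply: (IHf s sK x y) | apply: (IHg s sK x y)].
- exact: interior_cell_invariant.
- exact: reach_cell_invariant.
Qed.

Lemma cell_lequiv (R : realType) (m : nat) (AP : Type) (K : seq (seq 'rV[R]_m))
  (V : AP -> set 'rV[R]_m) s x y :
  is_polyhedral_model K V -> s \in K -> relint s x -> relint s y -> lequiv K V x y.
Proof.
move=> model sK sx sy phi.
by split; [exact: (sem_cell_invariant model sK sx sy)
          | exact: (sem_cell_invariant model sK sy sx)].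
Qed.

Lemma lequiv_trans (R : realType) (m : nat) (AP : Type) (K : seq (seq 'rV[R]_m))
  (V : AP -> set 'rV[R]_m) x y z :
  lequiv K V x y -> lequiv K V y z -> lequiv K V x z.
Proof.
by move=> xy yz phi; split => [/(xy phi).1 /(yz phi).1 | /(yz phi).2 /(xy phi).2].
Qed.

(* For a point x0 and a simplex s, some formula holds at x0 and fails on the
   cell of s unless that cell is equivalent to x0: if a point y1 of the cell is
   not equivalent to x0, a formula phi told apart x0 and y1 (negated if
   needed), and by cell invariance it tells apart x0 and the whole cell. *)
Lemma cell_separating_formula (R : realType) (m : nat) (AP : Type)
  (K : seq (seq 'rV[R]_m)) (V : AP -> set 'rV[R]_m) x0 s :
  is_polyhedral_model K V -> polyhedron K x0 -> s \in K ->
  exists psi : slcs AP, sem K V psi x0 /\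
    forall y, relint s y -> ~ lequiv K V x0 y -> ~ sem K V psi y.
Proof.
move=> model Px0 sK.
have [[y1 [sy1 not_x0y1]]|all_equiv] :=
  pselect (exists y, relint s y /\ ~ lequiv K V x0 y); last first.
  by exists FTop; split=> // y sy not_x0y _; apply: all_equiv; exists y.
have [phi phi_differs] : exists phi, ~ (sem K V phi x0 <-> sem K V phi y1).
  apply: contrapT => all_agree; apply: not_x0y1 => phi.
  by apply: contrapT => differs; apply: all_agree; exists phi.
have [phi_x0|not_phi_x0] := pselect (sem K V phi x0).
  exists phi; split=> // y sy _ phi_y; apply: phi_differs; split=> // _.
  exact: (sem_cell_invariant model sK sy sy1).
exists (FNeg phi); split; first by split.
move=> y sy _ [_ not_phi_y]; apply: not_phi_y.
have phi_y1 : sem K V phi y1.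
  by apply: contrapT => not_phi_y1; apply: phi_differs; split.
exact: (sem_cell_invariant model sK sy1 sy).
Qed.

Lemma separating_formula (R : realType) (m : nat) (AP : Type)
  (K : seq (seq 'rV[R]_m)) (V : AP -> set 'rV[R]_m) x0 (L : seq (seq 'rV[R]_m)) :
  is_polyhedral_model K V -> polyhedron K x0 -> {subset L <= K} ->
  exists Phi : slcs AP, sem K V Phi x0 /\
    forall s, s \in L -> forall y, relint s y -> ~ lequiv K V x0 y -> ~ sem K V Phi y.
Proof.
move=> model Px0; elim: L => [|s L IH] LK.
  by exists FTop; split => // s; rewrite in_nil.
have [Phi [Phi_x0 Phi_sep]] : exists Phi : slcs AP, sem K V Phi x0 /\
    forall s, s \in L -> forall y, relint s y -> ~ lequiv K V x0 y -> ~ sem K V Phi y.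
  by apply: IH => t tL; apply: LK; rewrite in_cons tL orbT.
have [psi [psi_x0 psi_sep]] := cell_separating_formula model Px0 (LK s (mem_head s L)).
exists (FAnd psi Phi); split; first by split.
move=> t; rewrite in_cons => /orP [/eqP -> | tL] y ty not_x0y [psi_y Phi_y].
  exact: (psi_sep y ty not_x0y).
exact: (Phi_sep t tL y ty not_x0y).
Qed.

Theorem mainTheorem3 (R : realType) (m : nat) (AP : finType)
  (K : seq (seq 'rV[R]_m)) (V : AP -> set 'rV[R]_m) :
  is_polyhedral_model K V ->
  finite_set (eq_classes K V) /\
  (forall C, eq_classes K V C ->
     exists phi : slcs AP,
       forall x, polyhedron K x -> (sem K V phi x <-> C x)).
Proof.
move=> model; have complexK := model.1.
pose cell_class (s : seq 'rV[R]_m) :=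
  [set y | polyhedron K y /\ forall x, relint s x -> lequiv K V x y].
split.
  apply: (sub_finite_set _ (finite_image cell_class (finite_seq K))).
  move=> C [x Px ->]; have [s sK sx] := polyhedron_cell complexK Px.
  exists s => //; apply/seteqP; split => y [Py equiv_y]; split => //.
    exact: equiv_y.
  by move=> x' sx'; apply: lequiv_trans equiv_y; exact: (cell_lequiv model sK sx' sx).
move=> C [x0 Px0 ->].
have [Phi [Phi_x0 Phi_sep]] :=
  separating_formula model Px0 (fun s (sK : s \in K) => sK).
exists Phi => z Pz; split; last by case=> _ x0z; apply: (x0z Phi).1.
move=> Phi_z; split=> //; apply: contrapT => not_x0z.
have [s sK sz] := polyhedron_cell complexK Pz.
exact: (Phi_sep s sK z sz not_x0z Phi_z).
Qed.
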